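(* Let $G$ be the corresponding graph of an array $A$ with reach one, let $F$ be a resulting DFS forest of $G$, merge the sub-trees of $F$, apply the merge step with the roots of $F$ to obtain $H$ and root list $R$, and let $F'$ be the resulting DFS forest of $H$ with visiting list $R$. Let $H'$ and $R'$ be the graph and root list obtained by applying the merge step to $F'$ with root list $R$. If we run DFS on $H'$ with visiting list $R'$, then all components of the resulting DFS forest are directed paths.
   Context: An array is a finite sequence $A=(A[1],\dots,A[n])$ of pairwise distinct real numbers. A comparison graph on $A$ is a directed graph on $\{1,\dots,n\}$ all of whose arcs $(u,v)$ satisfy $A[u]<A[v]$. The corresponding graph of $A$ with reach one has an arc $(i,j)$ whenever $j\equiv i\pm1\pmod n$, $j\ne i$, and $A[i]<A[j]$. Components are connected components of the underlying undirected graph. DFS: adjacency lists sorted in increasing $A$-value; given a visiting list $(l_1,\dots,l_m)$ (for $F$, some ordering of all vertices), for each unvisited $l_t$ call Visit$(l_t)$, where Visit$(u)$ marks $u$ and, for each out-neighbour $w$ of $u$ in increasing $A$-value that is unvisited, sets parent$(w)=u$ and calls Visit$(w)$. The resulting DFS forest has arcs $(\mathrm{parent}(w),w)$; its roots are the vertices without parent. Merging the sub-trees of $F$: for each component of $F$ whose root has exactly two children $a_1,b_1$, set $p=a_1,q=b_1$ and, while both are defined: if $A[p]<A[q]$ add $(p,q)$ and replace $p$ by its smallest-valued child in $F$ (undefined if none); else add $(q,p)$ and replace $q$ likewise. Component merge of components $C,D$: set $p,q$ to the minimum-valued vertices of $C,D$; while both defined: if $A[p]<A[q]$ add $(p,q)$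 and replace $p$ by the smallest-valued out-neighbour of $p$ within $C$ (ignoring arcs added in this merge; undefined if none); else add $(q,p)$ and replace $q$ analogously in $D$. Merge step with root list $(\rho_1,\dots,\rho_k)$ (the minimum-valued vertices of the components): component-merge the components of $\rho_{2j-1},\rho_{2j}$ for $j=1,\dots,\lfloor k/2\rfloor$ and return the list obtained by deleting the larger-valued root of each merged pair. *)

From HB Require Import structures.
From mathcomp Require Import all_boot all_order all_algebra.
From mathcomp Require Import reals.
Set Implicit Arguments. Unset Strict Implicit. Unset Printing Implicit Defensive.
Import Order.TTheory GRing.Theory Num.Theory.
Local Open Scope ring_scope.

(* Vertices {1,...,n} of the paper are represented by 'I_n = {0,...,n-1}.
   A directed graph on them is a finite set of arcs {set 'I_n * 'I_n}. *)

Section Alg.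
Variables (R : realType) (n : nat) (A : 'I_n -> R).

Definition arcs := {set 'I_n * 'I_n}.

Definition leA (x y : 'I_n) : bool := A x <= A y.
Definition sortA (s : seq 'I_n) : seq 'I_n := sort leA s.

Definition reach_one_graph : arcs :=
  [set e : 'I_n * 'I_n |
     [&& ((val e.2 == (val e.1 + 1) %% n)%N || ((val e.2 + 1) %% n == val e.1)%N),
         e.2 != e.1 & A e.1 < A e.2]].

Definition outs (E : arcs) (u : 'I_n) : seq 'I_n :=
  sortA [seq w <- enum 'I_n | (u, w) \in E].

(* DFS state: (visited vertices, arcs (parent(w), w) of the forest) *)
Definition vstate := ({set 'I_n} * arcs)%type.

(* Visit(u); the fuel bounds the recursion depth, and fuel n suffices since
   every nested call is on a fresh (unvisited) vertex. *)
Fixpoint visit (E : arcs) (fuel : nat) (u : 'I_n) (st : vstate) : vstate :=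
  match fuel with
  | 0 => st
  | f.+1 =>
      foldl (fun (st' : vstate) (w : 'I_n) =>
               if w \in st'.1 then st'
               else visit E f w (st'.1, (u, w) |: st'.2))
            (u |: st.1, st.2) (outs E u)
  end.

Definition dfs_forest (E : arcs) (L : seq 'I_n) : arcs * seq 'I_n :=
  let step (acc : vstate * seq 'I_n) (l : 'I_n) :=
    if l \in acc.1.1 then acc else (visit E n l acc.1, rcons acc.2 l) in
  let res := foldl step ((set0, set0), [::]) L in
  (res.1.2, res.2).

Definition children (F : arcs) (v : 'I_n) : seq 'I_n :=
  [seq w <- enum 'I_n | (v, w) \in F].
Definition minchild (F : arcs) (v : 'I_n) : option 'I_n :=
  ohead (sortA (children F v)).

(* Each iteration moves p (resp. q)
   to a vertex of strictly larger value in its own part, so fuel n suffices. *)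
Fixpoint mchain (np nq : 'I_n -> option 'I_n) (fuel : nat) (p q : 'I_n)
    (acc : arcs) : arcs :=
  match fuel with
  | 0 => acc
  | f.+1 =>
      if A p < A q then
        let acc' := (p, q) |: acc in
        match np p with Some p' => mchain np nq f p' q acc' | None => acc' end
      else
        let acc' := (q, p) |: acc in
        match nq q with Some q' => mchain np nq f p q' acc' | None => acc' end
  end.

Definition merge_subtrees_arcs (F : arcs) (roots : seq 'I_n) : arcs :=
  \bigcup_(r <- roots)
     match children F r with
     | [:: a1; b1] => mchain (minchild F) (minchild F) n a1 b1 set0
     | _ => set0
     end.

Definition merge_subtrees (F : arcs) (roots : seq 'I_n) : arcs :=
  F :|: merge_subtrees_arcs F roots.

Definition usym (E : arcs) : rel 'I_n := fun x y => ((x, y) \in E) || ((y, x) \in E).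
Definition compnt (E : arcs) (x : 'I_n) : seq 'I_n :=
  [seq y <- enum 'I_n | connect (usym E) x y].
Definition cmin (E : arcs) (x : 'I_n) : 'I_n := head x (sortA (compnt E x)).
Definition nextin (E : arcs) (C : seq 'I_n) (p : 'I_n) : option 'I_n :=
  ohead (sortA [seq w <- outs E p | w \in C]).

Definition comp_merge (E : arcs) (r1 r2 : 'I_n) : arcs :=
  let C := compnt E r1 in let D := compnt E r2 in
  mchain (nextin E C) (nextin E D) n (cmin E r1) (cmin E r2) set0.

Fixpoint mstep (E : arcs) (rs : seq 'I_n) : arcs * seq 'I_n :=
  match rs with
  | r1 :: r2 :: rest =>
      let res := mstep E rest in
      (comp_merge E r1 r2 :|: res.1,
       (if A r1 < A r2 then r1 else r2) :: res.2)
  | _ => (set0, rs)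
  end.

Definition merge_step (E : arcs) (rs : seq 'I_n) : arcs * seq 'I_n :=
  let res := mstep E rs in (E :|: res.1, res.2).

End Alg.

Definition component_is_dipath (n : nat) (E : {set 'I_n * 'I_n}) (v : 'I_n) : Prop :=
  exists s : seq 'I_n,
    [/\ uniq s,
        (forall x, (x \in s) = connect (usym E) v x) &
        (forall x y, x \in s ->
           ((x, y) \in E <->
            exists i, [/\ (i.+1 < size s)%N, nth v s i = x & nth v s i.+1 = y]))].

Definition all_components_dipaths (n : nat) (E : {set 'I_n * 'I_n}) : Prop :=
  forall v : 'I_n, component_is_dipath E v.

From HB Require Import structures.
From mathcomp Require Import all_boot all_order all_algebra.
From mathcomp Require Import reals.
Set Implicit Arguments. Unset Strict Implicit. Unset Printing Implicit Defensive.
Import Order.TTheory GRing.Theory Num.Theory.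
Local Open Scope ring_scope.

(* In the reach-one graph every vertex has at most two neighbours and every arc
   increases A.  Hence in a DFS forest F a vertex with a parent has at most one
   child and a root at most two: each tree of F is a root from which at most two
   increasing paths hang, and merging the sub-trees interleaves them into one
   increasing path through the tree.
   From then on the graph has a chain decomposition: its vertices split into
   increasing paths made of arcs of the graph, and no arc leaves its path.  A DFS
   visiting the heads of the chains retraces exactly the chains, and a merge step
   at these heads interleaves the chains pairwise into increasing paths of the new
   graph, which is again a chain decomposition. *)

Lemma connect_last (T : finType) (e : rel T) x y : connect e x y ->
  x = y \/ exists2 z, connect e x z & e z y.
Proof.
case/connectP=> p; case/lastP: p => [|p z] /=; first by left.
rewrite rcons_path last_rcons => /andP [xp pz] ->; right.
by exists (last x p) => //; apply/connectP; exists p.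
Qed.

Lemma connect_first (T : finType) (e : rel T) x y : connect e x y ->
  x = y \/ exists2 z, e x z & connect e z y.
Proof.
case/connectP=> [[|z p]] /=; first by left.
by case/andP=> xz zp ->; right; exists z => //; apply/connectP; exists p.
Qed.

Lemma connect_fwd_closed (T : finType) (e : rel T) (S : pred T) x y :
  (forall u v, S u -> e u v -> S v) -> S x -> connect e x y -> S y.
Proof.
move=> cl Sx /connectP [p]; elim: p x Sx => [|z p IH] x Sx /=; first by move=> _ ->.
by case/andP=> /(cl _ _ Sx) Sz; apply: IH.
Qed.

Lemma fin_lt_ind (d : Order.disp_t) (X : porderType d) (T : finType) (f : T -> X)
    (P : T -> Prop) :
  (forall x, (forall y, (f y < f x)%O -> P y) -> P x) -> forall x, P x.
Proof.
move=> IH; suff key k x : #|[set y | (f y < f x)%O]| = k -> P x by move=> x; exact: key.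
elim/ltn_ind: k x => k IHk x defk; apply: IH => y lt_yx.
apply: (IHk _ _ y erefl); rewrite -defk; apply: proper_card; apply/properP; split.
  by apply/subsetP => z; rewrite !inE => /lt_trans; apply.
by exists y; rewrite !inE ?lt_yx ?ltxx.
Qed.

Lemma size_uniq_ord n (s : seq 'I_n) : uniq s -> (size s <= n)%N.
Proof.
move/uniq_leq_size => /(_ (enum 'I_n)); rewrite size_enum_ord; apply=> x _.
by rewrite mem_enum.
Qed.

Lemma bigcup_seqP (I : eqType) (T : finType) (cs : seq I) (G : I -> {set T}) x :
  reflect (exists2 c, c \in cs & x \in G c) (x \in \bigcup_(c <- cs) G c).
Proof.
suff -> : (x \in \bigcup_(c <- cs) G c) = has (fun c => x \in G c) cs by apply: hasP.
by elim: cs => [|c cs IH]; rewrite ?big_nil ?inE // big_cons in_setU IH.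
Qed.

Lemma uniq_flatten_mem (T : eqType) (cs : seq (seq T)) c :
  uniq (flatten cs) -> c \in cs -> uniq c.
Proof.
elim: cs => [|d cs IH] //=; rewrite cat_uniq => /and3P [uniq_d _ uniq_cs].
by case/predU1P => [->|/IH]; auto.
Qed.

Lemma mem_tail (T : eqType) (x y : T) s : y \in s -> y \in x :: s.
Proof. by rewrite in_cons => ->; rewrite orbT. Qed.

Lemma uniq_flatten_disjoint (T : eqType) (cs : seq (seq T)) c c' x : uniq (flatten cs) ->
  c \in cs -> c' \in cs -> x \in c -> x \in c' -> c = c'.
Proof.
elim: cs => [|d cs IH] //=; rewrite cat_uniq => /and3P [_ /hasP dis ucs].
have notd e y : e \in cs -> y \in e -> y \in d -> False.
  by move=> ecs ye yd; apply: dis; exists y => //; apply/flattenP; exists e.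
rewrite !in_cons => /predU1P [->|ccs] /predU1P [->|c'cs] xc xc' //.
- by case: (notd _ _ c'cs xc').
- by case: (notd _ _ ccs xc).
- exact: IH.
Qed.

Lemma seq_pair_ind (T : Type) (P : seq T -> Prop) :
  P [::] -> (forall x, P [:: x]) -> (forall x y s, P s -> P [:: x, y & s]) ->
  forall s, P s.
Proof.
move=> P0 P1 P2 s; suff: P s /\ forall x, P (x :: s) by case.
by elim: s => [|x s [IH1 IH2]]; split=> // y; apply: P2.
Qed.

Section PathArcs.
Variable n : nat.

Definition arc_rel (E : arcs n) : rel 'I_n := fun x y => (x, y) \in E.

Fixpoint path_arcs (s : seq 'I_n) : arcs n :=
  if s is x :: ((y :: _) as t) then (x, y) |: path_arcs t else set0.

Lemma path_arcs_cons2 x y t : path_arcs [:: x, y & t] = (x, y) |: path_arcs (y :: t).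
Proof. by []. Qed.

Lemma path_arcs_cons x t : path_arcs t \subset path_arcs (x :: t).
Proof. by case: t => [|y t]; rewrite ?sub0set ?subsetUr. Qed.

Lemma path_arcs_cat pre s : path_arcs s \subset path_arcs (pre ++ s).
Proof. by elim: pre => //= x pre IH; apply: subset_trans IH (path_arcs_cons _ _). Qed.

Lemma path_arcs_cons_sub x s (Z : arcs n) :
  (if s is y :: _ then (x, y) \in Z else true) -> path_arcs s \subset Z ->
  path_arcs (x :: s) \subset Z.
Proof. by case: s => [|y s] // xy sub; rewrite path_arcs_cons2 subUset sub1set xy. Qed.

Lemma path_arcs_mem s x y : (x, y) \in path_arcs s -> (x \in s) && (y \in s).
Proof.
elim: s => [|a [|b t] IH] //=; try by rewrite inE.
case/setU1P => [[-> ->]|/IH /andP [xt yt]]; first by rewrite !inE !eqxx orbT.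
by rewrite in_cons xt in_cons yt !orbT.
Qed.

Lemma path_arcsP d s x y : (x, y) \in path_arcs s <->
  exists i, [/\ (i.+1 < size s)%N, nth d s i = x & nth d s i.+1 = y].
Proof.
elim: s => [|a [|b t] IH] /=; try by rewrite inE; split=> // [[i []]].
split=> [/setU1P [[<- <-]|/IH [i []]]|[[|i] [/= lt_i xi yi]]]; first by exists 0%N.
- by exists i.+1.
- by rewrite -xi -yi setU11.
- by apply/setU1P; right; apply/IH; exists i.
Qed.

End PathArcs.

Section Merging.
Variables (R : realType) (n : nat) (A : 'I_n -> R).
Hypothesis injA : injective A.
Local Notation le := (leA A).

(** * Sorting by value *)

Lemma leA_trans : transitive le.
Proof. by move=> y x z; apply: le_trans. Qed.

Lemma leA_total : total le.
Proof. by move=> x y; apply: le_total. Qed.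

Lemma leA_anti : antisymmetric le.
Proof. by move=> x y; rewrite /leA -eq_le => /eqP /injA. Qed.

Lemma leA_lt x y : x != y -> le x y = (A x < A y).
Proof. by move=> neq_xy; rewrite /leA le_eqVlt (inj_eq injA) (negbTE neq_xy). Qed.

Lemma sortA_head s m : m \in s -> (forall y, y \in s -> A m <= A y) ->
  exists t, sortA A s = m :: t.
Proof.
move=> ms min_m; have := mem_sort le s; rewrite -/(sortA A s).
have : sorted le (sortA A s) by apply: sort_sorted; exact: leA_total.
case: (sortA A s) => [|h t] sorted_ht mem_ht; first by move: ms; rewrite -mem_ht.
exists t; congr (_ :: _); apply: leA_anti; apply/andP; split; last first.
  by apply: min_m; rewrite -mem_ht mem_head.
rewrite -mem_ht in_cons in ms; case/predU1P: ms => [->|mt]; first exact: lexx.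
by have /allP := order_path_min leA_trans sorted_ht; apply.
Qed.

Lemma sortA_nil (s : seq 'I_n) : (forall y, y \notin s) -> sortA A s = [::].
Proof. by case: s => [|y s] // /(_ y); rewrite mem_head. Qed.

Lemma sorted_min x s : sorted le (x :: s) -> forall y, y \in s -> A x <= A y.
Proof. by move/(order_path_min leA_trans)/allP. Qed.

Lemma sorted_cat_lt pre x t y : sorted le (pre ++ x :: t) ->
  y \in pre ++ x :: t -> A x < A y -> y \in t.
Proof.
rewrite (sorted_pairwise leA_trans) pairwise_cat => /and3P [/allrelP le_pre _ _].
rewrite mem_cat in_cons => /or3P [yp|/eqP ->|//]; last by rewrite ltxx.
by rewrite ltNge; move: (le_pre y x yp (mem_head _ _)); rewrite /leA => ->.
Qed.

Lemma merge_cons2 x y s t : merge le (x :: s) (y :: t) =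
  if le x y then x :: merge le s (y :: t) else y :: merge le (x :: s) t.
Proof. by []. Qed.

(** * Depth-first search *)

Definition visit_step (E : arcs n) f u (st : vstate n) (w : 'I_n) : vstate n :=
  if w \in st.1 then st else visit A E f w (st.1, (u, w) |: st.2).

Lemma visitS E f u st :
  visit A E f.+1 u st = foldl (visit_step E f u) (u |: st.1, st.2) (outs A E u).
Proof. by []. Qed.

Lemma foldl_visit_step_visited E f u t (st : vstate n) :
  {subset t <= st.1} -> foldl (visit_step E f u) st t = st.
Proof.
elim: t => [|w t IH] //= sub_t.
by rewrite /visit_step sub_t ?mem_head // IH // => y yt; apply: sub_t; rewrite mem_tail.
Qed.

Definition dfs_step (E : arcs n) (acc : vstate n * seq 'I_n) (l : 'I_n) :=
  if l \in acc.1.1 then acc else (visit A E n l acc.1, rcons acc.2 l).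

Lemma dfs_forestE E L : let res := foldl (dfs_step E) ((set0, set0), [::]) L in
  dfs_forest A E L = (res.1.2, res.2).
Proof. by []. Qed.

Record dfs_invariant (E : arcs n) (roots : seq 'I_n) (V : {set 'I_n}) (F : arcs n) :
    Prop := {
  dfs_sub : F \subset E;
  dfs_parent_uniq : forall u u' w, (u, w) \in F -> (u', w) \in F -> u = u';
  dfs_root_orphan : forall r x, r \in roots -> (x, r) \notin F;
  dfs_visited : forall w, w \in V -> w \in roots \/ exists u, (u, w) \in F;
  dfs_target_visited : forall x y, (x, y) \in F -> y \in V;
  dfs_roots_visited : forall r, r \in roots -> r \in V }.

Lemma dfs_invariant_child E roots V F u w : dfs_invariant E roots V F ->
  u \in V -> (u, w) \in E -> w \notin V -> dfs_invariant E roots (w |: V) ((u, w) |: F).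
Proof.
move=> [subF parentF orphan visited target rootsV] uV uw wV; split.
- by rewrite subUset sub1set uw subF.
- have fresh y : (y, w) \notin F by apply: contra wV => /target.
  move=> a b x /setU1P [[-> ->]|ax] /setU1P [[-> //]|bx].
  + by rewrite (negbTE (fresh b)) in bx.
  + by move=> xw; rewrite xw (negbTE (fresh a)) in ax.
  + exact: parentF ax bx.
- move=> r x rR; rewrite in_setU1 negb_or orphan // andbT.
  by apply: contraNneq wV => -[_ <-]; apply: rootsV.
- move=> x /setU1P [->|/visited [xR|[y yx]]]; [right|by left|right].
    by exists u; apply: setU11.
  by exists y; apply: setU1r.
- by move=> x y /setU1P [[_ ->]|/target yV]; rewrite in_setU1 ?eqxx ?yV ?orbT.
- by move=> r /rootsV rV; rewrite in_setU1 rV orbT.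
Qed.

Lemma visit_invariant E roots f u V F : dfs_invariant E roots (u |: V) F ->
  u \notin V -> (n <= f + #|V|)%N ->
  dfs_invariant E roots (visit A E f u (V, F)).1 (visit A E f u (V, F)).2 /\
  u |: V \subset (visit A E f u (V, F)).1.
Proof.
elim: f u V F => [|f IH] u V F inv uV.
  have : (#|u |: V| <= n)%N by have := max_card (mem (u |: V)); rewrite card_ord.
  by rewrite cardsU1 uV add1n add0n => /leq_trans/[apply]; rewrite ltnn.
move=> le_n; rewrite visitS /=.
suff loop ws V1 F1 : {subset ws <= outs A E u} -> dfs_invariant E roots V1 F1 ->
    u |: V \subset V1 -> dfs_invariant E roots (foldl (visit_step E f u) (V1, F1) ws).1
      (foldl (visit_step E f u) (V1, F1) ws).2 /\
    V1 \subset (foldl (visit_step E f u) (V1, F1) ws).1.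
  by have [inv' sub'] := loop _ _ _ (fun w h => h) inv (subxx _).
elim: ws V1 F1 => [|w ws IHws] V1 F1 //= sub_ws inv1 sub1.
have sub_ws' : {subset ws <= outs A E u} by move=> x xws; apply: sub_ws; rewrite mem_tail.
have -> : visit_step E f u (V1, F1) w =
    if w \in V1 then (V1, F1) else visit A E f w (V1, (u, w) |: F1) by [].
case: ifP => wV1; first exact: IHws.
have uV1 : u \in V1 by apply: (subsetP sub1); rewrite setU11.
have uw : (u, w) \in E.
  by have := sub_ws w (mem_head _ _); rewrite mem_sort mem_filter mem_enum andbT.
have le_n1 : (n <= f + #|V1|)%N.
  apply: leq_trans le_n _; rewrite addSnnS leq_add2l.
  by have := subset_leq_card sub1; rewrite cardsU1 uV.
have inv_w := dfs_invariant_child inv1 uV1 uw (negbT wV1).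
have [inv2 sub2] := IH w V1 _ inv_w (negbT wV1) le_n1.
move: inv2 sub2; case: (visit A E f w _) => V2 F2 /= inv2 sub2.
have sub12 : V1 \subset V2 := subset_trans (subsetUr _ _) sub2.
have [inv3 sub3] := IHws V2 F2 sub_ws' inv2 (subset_trans sub1 sub12).
by split=> //; apply: subset_trans sub12 sub3.
Qed.

Lemma dfs_invariant_root E roots V F l : dfs_invariant E roots V F -> l \notin V ->
  dfs_invariant E (rcons roots l) (l |: V) F.
Proof.
move=> [subF parentF orphan visited target rootsV] lV; split=> //.
- move=> r x; rewrite mem_rcons => /predU1P [->|/orphan //].
  by apply: contra lV => /target.
- move=> w /setU1P [->|/visited [wR|]]; last by right.
    by left; rewrite mem_rcons mem_head.
  by left; rewrite mem_rcons mem_tail.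
- by move=> x y /target yV; rewrite in_setU1 yV orbT.
- by move=> r; rewrite mem_rcons in_setU1 => /predU1P [->|/rootsV ->]; rewrite ?eqxx ?orbT.
Qed.

Lemma dfs_fold_invariant E L V F rs : dfs_invariant E rs V F -> uniq rs ->
  let res := foldl (dfs_step E) ((V, F), rs) L in
  [/\ dfs_invariant E res.2 res.1.1 res.1.2, uniq res.2,
      {subset L <= res.1.1} & V \subset res.1.1].
Proof.
elim: L V F rs => [|l L IH] V F rs inv uniq_rs //=.
have -> : dfs_step E (V, F, rs) l =
    if l \in V then (V, F, rs) else (visit A E n l (V, F), rcons rs l) by [].
case: ifPn => lV.
  have [inv' uniq' sub' subV'] := IH V F rs inv uniq_rs; split=> // x.
  by case/predU1P => [->|/sub' //]; apply: (subsetP subV').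
have [] := visit_invariant (dfs_invariant_root inv lV) lV (leq_addr _ _).
case: (visit A E n l (V, F)) => V1 F1 /= inv1 sub1.
have uniq1 : uniq (rcons rs l).
  by rewrite rcons_uniq uniq_rs andbT; apply: contra lV => /(dfs_roots_visited inv).
have [inv' uniq' sub' subV'] := IH _ _ _ inv1 uniq1; split=> //.
  move=> x /predU1P [->|/sub' //]; apply: (subsetP subV').
  by apply: (subsetP sub1); rewrite setU11.
exact: subset_trans (subset_trans (subsetUr _ _) sub1) subV'.
Qed.

Record rooted_forest (E F : arcs n) (roots : seq 'I_n) : Prop := {
  forest_sub : F \subset E;
  forest_parent_uniq : forall u u' w, (u, w) \in F -> (u', w) \in F -> u = u';
  forest_root_orphan : forall r x, r \in roots -> (x, r) \notin F;
  forest_cover : forall v, v \in roots \/ exists u, (u, v) \in F;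
  forest_roots_uniq : uniq roots }.

Lemma dfs_forest_rooted E L : (forall v, v \in L) ->
  rooted_forest E (dfs_forest A E L).1 (dfs_forest A E L).2.
Proof.
move=> allL; rewrite dfs_forestE /=.
have inv0 : dfs_invariant E [::] set0 set0.
  by split=> // [|u u' w|w|x y]; rewrite ?sub0set ?inE.
have [[subF parentF orphan visited _ _] uniq_rs sub_L _] := dfs_fold_invariant L inv0 isT.
by split=> // v; apply/visited/sub_L.
Qed.

(** * Chain decompositions *)

Definition arcs_increasing (E : arcs n) := forall x y, (x, y) \in E -> A x < A y.

Definition is_chain (E : arcs n) (c : seq 'I_n) :=
  [/\ sorted le c, uniq c, path_arcs c \subset E &
      forall x y, x \in c -> (x, y) \in E -> y \in c].

Record chain_decomposition (E : arcs n) (cs : seq (seq 'I_n)) : Prop := {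
  chain_arcs_increasing : arcs_increasing E;
  chain_decomposition_chains : forall c, c \in cs -> is_chain E c /\ c != [::];
  chain_decomposition_uniq : uniq (flatten cs);
  chain_decomposition_sources : forall x y, (x, y) \in E -> x \in flatten cs }.

Lemma is_chain_behead E x s : arcs_increasing E -> is_chain E (x :: s) -> is_chain E s.
Proof.
move=> incE [sorted_xs /andP [_ uniq_s] arcs_xs closed_xs]; split=> //.
- exact: path_sorted sorted_xs.
- exact: subset_trans (path_arcs_cons x s) arcs_xs.
move=> y z ys yz; have := closed_xs y z (mem_tail _ ys) yz.
case/predU1P=> // zx; have := sorted_min sorted_xs ys.
by rewrite leNgt -zx incE.
Qed.

Lemma outs_chain E x y s : arcs_increasing E -> is_chain E [:: x, y & s] ->
  exists2 t, outs A E x = y :: t & {subset t <= y :: s}.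
Proof.
move=> incE [sorted_xs _ arcs_xs closed_xs].
have mem_outs z : (z \in outs A E x) = ((x, z) \in E).
  by rewrite mem_sort mem_filter mem_enum andbT.
have out_x z : (x, z) \in E -> z \in y :: s.
  move=> xz; have := closed_xs x z (mem_head _ _) xz.
  by case/predU1P=> // zx; move: (incE _ _ xz); rewrite zx ltxx.
have [t def_t] : exists t, outs A E x = y :: t.
  apply: sortA_head; first by rewrite mem_filter mem_enum andbT (subsetP arcs_xs) ?setU11.
  move=> z; rewrite mem_filter mem_enum andbT => /out_x /predU1P [-> //|zs].
  exact: sorted_min (path_sorted sorted_xs) _ zs.
by exists t => // z zt; apply: out_x; rewrite -mem_outs def_t mem_tail.
Qed.

Lemma visit_chain E s c f (V : {set 'I_n}) (F : arcs n) :
  arcs_increasing E -> is_chain E (c :: s) ->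
  (forall x, x \in c :: s -> x \notin V) -> (size s < f)%N ->
  visit A E f c (V, F) = (V :|: [set x in c :: s], F :|: path_arcs (c :: s)).
Proof.
move=> incE; elim: s c f V F => [|d s IH] c [|f] V F // chain_cs fresh_cs lt_sf.
  rewrite visitS /outs sortA_nil /=; last first.
    move=> y; rewrite mem_filter mem_enum andbT; apply/negP => cy.
    case: chain_cs => _ _ _ /(_ c y (mem_head _ _) cy) /[!inE] /eqP yc.
    by move: (incE _ _ cy); rewrite yc ltxx.
  by rewrite setU0; congr (_, _); apply/setP => x; rewrite !inE orbC.
have [t def_t sub_t] := outs_chain incE chain_cs.
have /andP [c_notin_ds _] : uniq [:: c, d & s] by case: chain_cs.
have fresh_ds x : x \in d :: s -> x \notin c |: V.
  move=> xs; rewrite in_setU1 negb_or (fresh_cs x (mem_tail c xs)) andbT.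
  by apply: contraNneq c_notin_ds => <-.
rewrite visitS def_t /= {2}/visit_step /= (negbTE (fresh_ds d (mem_head _ _))).
rewrite (IH d f _ _ (is_chain_behead incE chain_cs) fresh_ds lt_sf).
rewrite foldl_visit_step_visited /=; last first.
  by move=> w /sub_t wt; rewrite in_setU inE wt orbT.
congr (_, _); first by apply/setP => x; rewrite !inE; case: (x == c); rewrite ?orbT.
by rewrite -setUA setUCA.
Qed.

(* Default for [head]; chains are never empty. *)
Variable x0 : 'I_n.

Lemma dfs_fold_chains E cs (V : {set 'I_n}) (F : arcs n) rs : arcs_increasing E ->
  (forall c, c \in cs -> is_chain E c /\ c != [::]) -> uniq (flatten cs) ->
  (forall x, x \in flatten cs -> x \notin V) ->
  foldl (dfs_step E) ((V, F), rs) (map (head x0) cs) =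
  ((V :|: [set x in flatten cs], F :|: \bigcup_(c <- cs) path_arcs c),
   rs ++ map (head x0) cs).
Proof.
move=> incE; elim: cs V F rs => [|c cs IH] V F rs chains_cs uniq_cs fresh_cs /=.
  by rewrite big_nil !setU0 cats0.
have chains_tl c' : c' \in cs -> is_chain E c' /\ c' != [::].
  by move=> c'cs; apply: chains_cs; rewrite mem_tail.
have [chain_c] := chains_cs c (mem_head _ _); clear chains_cs.
case: c chain_c uniq_cs fresh_cs => [|h t] // chain_ht.
rewrite -[flatten _]/((h :: t) ++ flatten cs) => uniq_cs fresh_cs _.
move: (uniq_cs); rewrite cat_uniq => /and3P [uniq_ht /hasP dis uniq_flat].
have fresh_h : h \notin V by apply: fresh_cs; rewrite mem_head.
rewrite {2}/dfs_step /= (negbTE fresh_h) (@visit_chain E t) //; last first.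
- exact: size_uniq_ord uniq_ht.
- by move=> x xht; apply: fresh_cs; rewrite mem_cat xht.
rewrite IH //; last first.
  move=> x xcs; rewrite in_setU negb_or fresh_cs ?mem_cat ?xcs ?orbT //= inE.
  by apply/negP => xht; apply: dis; exists x.
rewrite cat_rcons big_cons setUA; congr (_, _, _).
by apply/setP => y; rewrite !inE mem_cat !orbA.
Qed.

Lemma dfs_forest_chains E cs : chain_decomposition E cs ->
  dfs_forest A E (map (head x0) cs) = (\bigcup_(c <- cs) path_arcs c, map (head x0) cs).
Proof.
case=> incE chains_cs uniq_cs _; rewrite dfs_forestE dfs_fold_chains //= ?set0U //.
by move=> x _; rewrite inE.
Qed.

Lemma usym_sym (E : arcs n) : symmetric (usym E).
Proof. by move=> x y; rewrite /usym orbC. Qed.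

Lemma connect_usym_path_arcs (E : arcs n) (s : seq 'I_n) x y : path_arcs s \subset E ->
  x \in s -> y \in s -> connect (usym E) x y.
Proof.
case: s => [|h t] // arcs_ht.
suff from_h z : z \in h :: t -> connect (usym E) h z.
  move=> /from_h hx /from_h; apply: connect_trans.
  by rewrite (sym_connect_sym (@usym_sym E)).
elim: t h arcs_ht => [|h' t IH] h arcs_ht; first by rewrite inE => /eqP ->.
case/predU1P=> [-> //|zt]; apply: connect_trans (IH h' _ zt).
  by apply: connect1; rewrite /usym (subsetP arcs_ht) ?setU11.
exact: subset_trans (path_arcs_cons h _) arcs_ht.
Qed.

Lemma connect_usym_chain (E : arcs n) cs c x y : chain_decomposition E cs ->
  c \in cs -> x \in c -> connect (usym E) x y = (y \in c).
Proof.
case=> _ chains_cs uniq_cs sources_cs ccs xc.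
have [[_ _ arcs_c closed_c] _] := chains_cs c ccs.
apply/idP/idP; last exact: connect_usym_path_arcs.
have arc_closed a b : (a, b) \in E -> (a \in c) = (b \in c).
  move=> ab; apply/idP/idP => [ac|bc]; first exact: closed_c ab.
  have /flattenP [c' c'cs ac'] := sources_cs _ _ ab.
  have [[_ _ _ closed_c'] _] := chains_cs c' c'cs.
  by rewrite (uniq_flatten_disjoint uniq_cs ccs c'cs bc (closed_c' _ _ ac' ab)).
move=> /(closed_connect _) <- //; apply: intro_closed.
  exact: sym_connect_sym (@usym_sym E).
by move=> a b /orP [] /arc_closed ->.
Qed.

Lemma chain_decomposition_forest E cs : chain_decomposition E cs ->
  chain_decomposition (\bigcup_(c <- cs) path_arcs c) cs.
Proof.
case=> incE chains_cs uniq_cs _; split=> //.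
- move=> x y /bigcup_seqP [c ccs xy]; apply: incE.
  by have [[_ _ arcs_c _] _] := chains_cs c ccs; apply: (subsetP arcs_c).
- move=> c ccs; have [[sorted_c uniq_c _ _] nil_c] := chains_cs c ccs.
  split=> //; split=> //.
    by apply/subsetP => e ec; apply/bigcup_seqP; exists c.
  move=> x y xc /bigcup_seqP [c' c'cs /path_arcs_mem /andP [xc' yc']].
  by rewrite (uniq_flatten_disjoint uniq_cs ccs c'cs xc xc').
- move=> x y /bigcup_seqP [c ccs /path_arcs_mem /andP [xc _]].
  by apply/flattenP; exists c.
Qed.

Lemma chain_forest_dipaths E cs : chain_decomposition E cs ->
  all_components_dipaths (\bigcup_(c <- cs) path_arcs c).
Proof.
move/chain_decomposition_forest => dec v; set P := \bigcup_(c <- cs) path_arcs c.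
have [_ chains_cs uniq_cs sources_cs] := dec.
have [/flattenP [c ccs vc]|v_notin] := boolP (v \in flatten cs).
  have [[_ uniq_c _ _] _] := chains_cs c ccs.
  exists c; split=> // [x|x y xc]; first by rewrite (connect_usym_chain x dec ccs vc).
  rewrite -(path_arcsP v); split=> [/bigcup_seqP [c' c'cs /[dup] xy]|xy].
    case/path_arcs_mem/andP => xc' _.
    by rewrite (uniq_flatten_disjoint uniq_cs ccs c'cs xc xc').
  by apply/bigcup_seqP; exists c.
have isolated y : ~~ usym P v y.
  apply: contra v_notin => /orP [/sources_cs //|].
  by case/bigcup_seqP=> c ccs /path_arcs_mem /andP [_ vc]; apply/flattenP; exists c.
exists [:: v]; split=> // [x|x y]; rewrite inE.
  apply/eqP/idP => [-> //|/connectP [[|y p] /= vp ->] //].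
  by case/andP: vp => /negP; rewrite (negbTE (isolated y)).
move=> /eqP ->; split=> [vy|[i []] //]; have := isolated y.
by rewrite /usym vy.
Qed.

(** * Merging increasing chains *)

Definition follows (next : 'I_n -> option 'I_n) (s : seq 'I_n) :=
  forall pre x t, s = pre ++ x :: t -> next x = ohead t.

Lemma follows_head next x s : follows next (x :: s) -> next x = ohead s.
Proof. by move/(_ [::] x s erefl). Qed.

Lemma follows_next next x y s : follows next [:: x, y & s] -> next x = Some y.
Proof. exact: follows_head. Qed.

Lemma follows_last next x : follows next [:: x] -> next x = None.
Proof. exact: follows_head. Qed.

Lemma follows_behead next x s : follows next (x :: s) -> follows next s.
Proof. by move=> fol pre y t def_s; apply: (fol (x :: pre)); rewrite def_s. Qed.

Definition increasing_arcs_on (U : seq 'I_n) : arcs n :=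
  [set e | [&& A e.1 < A e.2, e.1 \in U & e.2 \in U]].

Lemma increasing_arcs_onS U U' : {subset U <= U'} ->
  increasing_arcs_on U \subset increasing_arcs_on U'.
Proof. by move=> sub; apply/subsetP => e /[!inE] /and3P [-> /sub -> /sub ->]. Qed.

Lemma mchain_sub_acc np nq f p q (acc : arcs n) : acc \subset mchain A np nq f p q acc.
Proof.
elim: f p q acc => [|f IH] p q acc /=; first exact: subxx.
case: ifP => _; [case: (np p) => [p'|]|case: (nq q) => [q'|]];
  by [apply: subset_trans (IH _ _ _); apply: subsetUr|apply: subsetUr].
Qed.

Lemma nlt_gtA p q : p != q -> ~~ (A p < A q) -> A q < A p.
Proof. by move=> neq_pq; rewrite -leNgt le_eqVlt (inj_eq injA) eq_sym (negbTE neq_pq). Qed.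

Section Mchain.
Variables (np nq : 'I_n -> option 'I_n).

Lemma mchainS f p q (acc : arcs n) : mchain A np nq f.+1 p q acc =
  if A p < A q then
    if np p is Some p' then mchain A np nq f p' q ((p, q) |: acc) else (p, q) |: acc
  else if nq q is Some q' then mchain A np nq f p q' ((q, p) |: acc) else (q, p) |: acc.
Proof. by []. Qed.

Lemma mchain_sub_increasing f p s1 q s2 (acc : arcs n) :
  follows np (p :: s1) -> follows nq (q :: s2) ->
  (forall x y, x \in p :: s1 -> y \in q :: s2 -> x != y) ->
  mchain A np nq f p q acc \subset acc :|: increasing_arcs_on ((p :: s1) ++ (q :: s2)).
Proof.
elim: f p s1 q s2 acc => [|f IH] p s1 q s2 acc fol1 fol2 dis; first exact: subsetUl.
have add_inc x y U : A x < A y -> x \in U -> y \in U ->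
    (x, y) |: acc \subset acc :|: increasing_arcs_on U.
  by move=> lt_xy xU yU; rewrite subUset subsetUl sub1set !inE /= lt_xy xU yU orbT.
have neq_pq : p != q by apply: dis; rewrite mem_head.
rewrite mchainS; case: (boolP (A p < A q)) => [lt_pq|/(nlt_gtA neq_pq) lt_qp].
  case: s1 fol1 dis => [|p' s1] fol1 dis.
    by rewrite (follows_last fol1); apply: add_inc; rewrite ?(mem_cat, inE, eqxx, orbT).
  rewrite (follows_next fol1).
  apply: subset_trans (IH p' s1 q s2 _ (follows_behead fol1) fol2 _) _.
    by move=> x y xs; apply: dis; apply: mem_tail.
  rewrite subUset add_inc ?(mem_cat, inE, eqxx, orbT) //=.
  by apply: subset_trans (subsetUr _ _); apply: increasing_arcs_onS => x; apply: mem_tail.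
case: s2 fol2 dis => [|q' s2] fol2 dis.
  by rewrite (follows_last fol2); apply: add_inc; rewrite ?(mem_cat, inE, eqxx, orbT).
rewrite (follows_next fol2).
apply: subset_trans (IH p s1 q' s2 _ fol1 (follows_behead fol2) _) _.
  by move=> x y xs ys; apply: dis => //; apply: mem_tail.
rewrite subUset add_inc ?(mem_cat, inE, eqxx, orbT) //=.
apply: subset_trans (subsetUr _ _); apply: increasing_arcs_onS => x.
by rewrite -!cat_cons !mem_cat => /orP [->|/mem_tail ->]; rewrite ?orbT.
Qed.

Lemma mchain_path_arcs f p s1 q s2 (acc : arcs n) :
  follows np (p :: s1) -> follows nq (q :: s2) ->
  (forall x y, x \in p :: s1 -> y \in q :: s2 -> x != y) -> (size s1 + size s2 < f)%N ->
  path_arcs (merge le (p :: s1) (q :: s2)) \subset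
    path_arcs (p :: s1) :|: path_arcs (q :: s2) :|: mchain A np nq f p q acc.
Proof.
elim: f p s1 q s2 acc => [|f IH] // p s1 q s2 acc fol1 fol2 dis lt_f.
have neq_pq : p != q by apply: dis; rewrite mem_head.
rewrite mchainS merge_cons2 (leA_lt neq_pq).
case: (boolP (A p < A q)) => [lt_pq|/(nlt_gtA neq_pq) lt_qp].
  case: s1 fol1 dis lt_f => [|p' s1] fol1 dis lt_f.
    rewrite (follows_last fol1) path_arcs_cons2 subUset sub1set !in_setU set11 !orbT.
    by rewrite setUAC subsetUr.
  rewrite (follows_next fol1); apply: path_arcs_cons_sub.
    rewrite merge_cons2; case: ifP => _; rewrite in_setU; first by rewrite !inE eqxx.
    by rewrite (subsetP (mchain_sub_acc _ _ _ _ _ _)) ?orbT // setU11.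
  apply: subset_trans (IH p' s1 q s2 _ (follows_behead fol1) fol2 _ lt_f) _.
    by move=> x y xs; apply: dis; apply: mem_tail.
  by apply/setSU/setSU/path_arcs_cons.
case: s2 fol2 dis lt_f => [|q' s2] fol2 dis lt_f.
  rewrite (follows_last fol2) path_arcs_cons2 subUset sub1set !in_setU set11 !orbT.
  by rewrite -setUA subsetUl.
rewrite (follows_next fol2); apply: path_arcs_cons_sub.
  rewrite merge_cons2; case: ifP => _; rewrite in_setU; last by rewrite !inE eqxx orbT.
  by rewrite (subsetP (mchain_sub_acc _ _ _ _ _ _)) ?orbT // setU11.
apply: subset_trans (IH p s1 q' s2 _ fol1 (follows_behead fol2) _ _) _.
- by move=> x y xs ys; apply: dis => //; apply: mem_tail.
- by rewrite addnS in lt_f.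
by apply/setSU/setUS/path_arcs_cons.
Qed.

End Mchain.

Lemma compnt_chain E cs c r y : chain_decomposition E cs -> c \in cs -> r \in c ->
  (y \in compnt E r) = (y \in c).
Proof.
by move=> dec ccs rc; rewrite mem_filter mem_enum andbT (connect_usym_chain y dec ccs rc).
Qed.

Lemma nextin_chain E cs c r : chain_decomposition E cs -> c \in cs -> r \in c ->
  follows (nextin A E (compnt E r)) c.
Proof.
move=> dec ccs rc pre x t def_c; have [incE chains_cs _ _] := dec.
have [[sorted_c _ arcs_c _] _] := chains_cs c ccs.
set succs := [seq w <- outs A E x | w \in compnt E r].
have mem_succs y : (y \in succs) = ((x, y) \in E) && (y \in c).
  rewrite mem_filter (compnt_chain y dec ccs rc) mem_sort mem_filter mem_enum.
  by rewrite andbT andbC.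
have in_t y : (x, y) \in E -> y \in c -> y \in t.
  move=> xy; rewrite def_c in sorted_c *; move/(sorted_cat_lt sorted_c).
  by apply; apply: incE.
rewrite /nextin; case: t def_c in_t => [|q t] def_c in_t.
  by rewrite sortA_nil // => y; rewrite mem_succs; apply/negP => /andP [xy /(in_t _ xy)].
have xq : (x, q) \in E.
  apply: (subsetP arcs_c); rewrite def_c.
  by apply: (subsetP (path_arcs_cat _ _)); rewrite setU11.
have [t' ->] // : exists t', sortA A succs = q :: t'.
apply: sortA_head => [|y]; first by rewrite mem_succs xq def_c mem_cat !inE eqxx !orbT.
rewrite mem_succs => /andP [xy /(in_t _ xy) /predU1P [-> //|yt]].
apply: sorted_min yt; rewrite def_c in sorted_c.
by have [_ /path_sorted] := cat_sorted2 sorted_c.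
Qed.

Lemma cmin_chain E cs r t : chain_decomposition E cs -> r :: t \in cs -> cmin A E r = r.
Proof.
move=> dec ccs; have [[sorted_c _ _ _] _] := chain_decomposition_chains dec ccs.
rewrite /cmin; have [t' ->] // : exists t', sortA A (compnt E r) = r :: t'.
apply: sortA_head => [|y]; rewrite (compnt_chain _ dec ccs (mem_head _ _)) ?mem_head //.
by case/predU1P => [-> //|]; apply: sorted_min.
Qed.

Lemma comp_merge_chains E cs r1 t1 r2 t2 : chain_decomposition E cs ->
  r1 :: t1 \in cs -> r2 :: t2 \in cs -> uniq ((r1 :: t1) ++ (r2 :: t2)) ->
  path_arcs (merge le (r1 :: t1) (r2 :: t2)) \subset E :|: comp_merge A E r1 r2 /\
  comp_merge A E r1 r2 \subset increasing_arcs_on ((r1 :: t1) ++ (r2 :: t2)).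
Proof.
move=> dec c1cs c2cs uniq12; have [_ chains_cs _ _] := dec.
have [[_ _ arcs1 _] _] := chains_cs _ c1cs; have [[_ _ arcs2 _] _] := chains_cs _ c2cs.
rewrite /comp_merge (cmin_chain dec c1cs) (cmin_chain dec c2cs).
have fol1 := nextin_chain dec c1cs (mem_head _ _).
have fol2 := nextin_chain dec c2cs (mem_head _ _).
have dis x y : x \in r1 :: t1 -> y \in r2 :: t2 -> x != y.
  move: uniq12; rewrite cat_uniq => /and3P [_ /hasPn dis _] xc1 yc2.
  by apply: contraNneq (dis y yc2) => <-.
have lt_n : (size t1 + size t2 < n)%N.
  by move: (size_uniq_ord uniq12); rewrite size_cat /= addSn addnS => /ltnW.
split.
  apply: subset_trans (mchain_path_arcs set0 fol1 fol2 dis lt_n) _.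
  by apply: setSU; rewrite subUset arcs1 arcs2.
by apply: subset_trans (mchain_sub_increasing n set0 fol1 fol2 dis) _; rewrite set0U.
Qed.

Fixpoint merge_pairs (cs : seq (seq 'I_n)) : seq (seq 'I_n) :=
  if cs is c1 :: c2 :: rest then merge le c1 c2 :: merge_pairs rest else cs.

Lemma perm_flatten_merge_pairs cs : perm_eq (flatten (merge_pairs cs)) (flatten cs).
Proof.
elim/seq_pair_ind: cs => // c1 c2 rest IH /=.
by rewrite catA perm_cat // perm_merge.
Qed.

Lemma mem_merge_pairs cs c : c \in merge_pairs cs ->
  c \in cs \/ exists c1 c2, [/\ c1 \in cs, c2 \in cs & c = merge le c1 c2].
Proof.
elim/seq_pair_ind: cs c => [|c0|c1 c2 rest IH] c; [by []|by left|].
rewrite /= in_cons => /predU1P [->|/IH [crest|[d1 [d2 [d1r d2r ->]]]]].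
- by right; exists c1, c2; rewrite !in_cons !eqxx ?orbT.
- by left; rewrite !mem_tail.
- by right; exists d1, d2; rewrite !mem_tail.
Qed.

Lemma merge_pairs_cover cs c : c \in cs ->
  exists2 c', c' \in merge_pairs cs & {subset c <= c'}.
Proof.
elim/seq_pair_ind: cs c => [|c0|c1 c2 rest IH] c //.
  by rewrite inE => /eqP ->; exists c0; rewrite ?mem_head.
rewrite !in_cons => /predU1P [->|/predU1P [->|/IH [c' c'r sub]]].
- by exists (merge le c1 c2) => [|x]; rewrite ?mem_head // mem_merge mem_cat => ->.
- exists (merge le c1 c2) => [|x]; first exact: mem_head.
  by rewrite mem_merge mem_cat => ->; rewrite orbT.
- by exists c'; rewrite ?mem_tail.
Qed.

Lemma mstep_chains E cs0 cs : chain_decomposition E cs0 ->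
  {subset cs <= cs0} -> uniq (flatten cs) ->
  let M := mstep A E (map (head x0) cs) in
  [/\ M.2 = map (head x0) (merge_pairs cs),
      forall c, c \in merge_pairs cs -> path_arcs c \subset E :|: M.1 &
      M.1 \subset \bigcup_(c <- merge_pairs cs) increasing_arcs_on c].
Proof.
move=> dec; elim/seq_pair_ind: cs => [|c|c1 c2 rest IH] sub_cs uniq_cs /=.
- by split=> //; rewrite big_nil.
- split=> [|c'|] //; last by rewrite sub0set.
  rewrite inE => /eqP ->.
  have [[_ _ arcs_c _] _] := chain_decomposition_chains dec (sub_cs c (mem_head _ _)).
  exact: subset_trans arcs_c (subsetUl _ _).
have c1cs : c1 \in cs0 by apply: sub_cs; rewrite mem_head.
have c2cs : c2 \in cs0 by apply: sub_cs; rewrite !inE eqxx orbT.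
move: uniq_cs; rewrite -[flatten _]/(c1 ++ c2 ++ flatten rest) catA cat_uniq.
case/and3P=> uniq12 _ uniq_rest.
have [IH1 IH2 IH3] := IH (fun c cr => sub_cs c (mem_tail _ (mem_tail _ cr))) uniq_rest.
have [_ /negP] := chain_decomposition_chains dec c1cs.
have [_ /negP] := chain_decomposition_chains dec c2cs.
case: c1 c2 c1cs c2cs uniq12 {sub_cs} => [|r1 t1] [|r2 t2] // c1cs c2cs uniq12 _ _.
have [CM1 CM2] := comp_merge_chains dec c1cs c2cs uniq12.
have neq_r12 : r1 != r2.
  move: uniq12; rewrite cat_uniq => /and3P [_ /hasPn /(_ r2 (mem_head _ _)) r2_notin _].
  by apply: contraNneq r2_notin => <-; rewrite mem_head.
split.
- by rewrite IH1 merge_cons2 (leA_lt neq_r12); case: ifP.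
- move=> c /predU1P [->|/IH2 sub_c].
    by apply: subset_trans CM1 _; apply/setUS/subsetUl.
  by apply: subset_trans sub_c _; apply/setUS/subsetUr.
rewrite big_cons subUset; apply/andP; split.
  apply: subset_trans CM2 (subset_trans _ (subsetUl _ _)).
  by apply: increasing_arcs_onS => x; rewrite mem_merge.
exact: subset_trans IH3 (subsetUr _ _).
Qed.

Lemma merge_step_chains E cs : chain_decomposition E cs ->
  let H := merge_step A E (map (head x0) cs) in
  H.2 = map (head x0) (merge_pairs cs) /\ chain_decomposition H.1 (merge_pairs cs).
Proof.
move=> dec; have [incE chains_cs uniq_cs sources_cs] := dec.
have [M2 M_arcs M_inc] := mstep_chains dec (fun c h => h) uniq_cs.
rewrite /merge_step /=; split=> //; set M := (mstep A E _).1 in M_arcs M_inc *.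
have perm_flat := perm_flatten_merge_pairs cs.
have uniq_pcs : uniq (flatten (merge_pairs cs)) by rewrite (perm_uniq perm_flat).
have M_within e : e \in M ->
    A e.1 < A e.2 /\ exists2 c, c \in merge_pairs cs & (e.1 \in c) && (e.2 \in c).
  move/(subsetP M_inc)/bigcup_seqP => [c cp]; rewrite inE => /and3P [lt_e e1c e2c].
  by split=> //; exists c; rewrite ?e1c.
split=> //.
- by move=> x y /setUP [/incE|/M_within []].
- move=> c cp; split; last first.
    case/mem_merge_pairs: cp => [/chains_cs [_ //]|[c1 [c2 [c1cs c2cs ->]]]].
    have [_] := chains_cs c1 c1cs; rewrite -!size_eq0 size_merge size_cat.
    by rewrite addn_eq0 negb_and => ->.
  split; [|exact: uniq_flatten_mem uniq_pcs cp|exact: M_arcs|].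
    case/mem_merge_pairs: cp => [/chains_cs [[]] //|[c1 [c2 [c1cs c2cs ->]]]].
    have [[sorted1 _ _ _] _] := chains_cs c1 c1cs.
    have [[sorted2 _ _ _] _] := chains_cs c2 c2cs.
    exact: (merge_sorted leA_total sorted1 sorted2).
  move=> x y xc /setUP [xy|/M_within [_ [c' c'p /andP [xc' yc']]]]; last first.
    by rewrite (uniq_flatten_disjoint uniq_pcs cp c'p xc xc').
  have /flattenP [d dcs xd] := sources_cs _ _ xy.
  have [[_ _ _ closed_d] _] := chains_cs d dcs.
  have [c'' c''p sub_d] := merge_pairs_cover dcs.
  by rewrite (uniq_flatten_disjoint uniq_pcs cp c''p xc (sub_d _ xd)) sub_d // (closed_d x).
move=> x y /setUP [/sources_cs|/M_within [_ [c cp /andP [xc _]]]].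
  by rewrite (perm_mem perm_flat).
by apply/flattenP; exists c.
Qed.

(** * DFS forests of the reach-one graph *)

Definition cyclic_neighbour (x y : 'I_n) := (y == ordS x) || (y == ord_pred x).

Lemma cyclic_neighbour_sym x y : cyclic_neighbour x y -> cyclic_neighbour y x.
Proof.
by case/orP=> /eqP ->; rewrite /cyclic_neighbour ?ordSK ?ord_predK eqxx ?orbT.
Qed.

Lemma cyclic_neighbour_pigeonhole x a b c : cyclic_neighbour x a ->
  cyclic_neighbour x b -> cyclic_neighbour x c -> [\/ a = b, a = c | b = c].
Proof.
by do 3!case/orP=> /eqP ->; first [exact: Or31 | exact: Or32 | exact: Or33].
Qed.

Lemma reach_one_graph_arc x y : (x, y) \in reach_one_graph A ->
  cyclic_neighbour x y /\ A x < A y.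
Proof.
rewrite inE /= => /and3P [/orP adj _ lt_xy]; split=> //; rewrite /cyclic_neighbour.
case: adj => [/eqP vy|/eqP vx].
  by rewrite (_ : y = ordS x) ?eqxx //; apply: val_inj; rewrite /= vy addn1.
rewrite (_ : x = ordS y) ?ordSK ?eqxx ?orbT //.
by apply: val_inj; rewrite /= -vx addn1.
Qed.

Section ReachOneForest.
Variables (F : arcs n) (roots : seq 'I_n).
Hypothesis forestF : rooted_forest (reach_one_graph A) F roots.
Local Notation desc := (connect (arc_rel F)).

Lemma forest_arc x y : (x, y) \in F -> cyclic_neighbour x y /\ A x < A y.
Proof. by move/(subsetP (forest_sub forestF)); apply: reach_one_graph_arc. Qed.

Lemma forest_lt x y : (x, y) \in F -> A x < A y.
Proof. by case/forest_arc. Qed.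

Lemma desc1 x y : (x, y) \in F -> desc x y.
Proof. exact: connect1. Qed.

Lemma desc_le x y : desc x y -> A x <= A y.
Proof.
apply: (connect_fwd_closed (S := [pred z | A x <= A z])) => //= u v le_xu /forest_lt.
by move/ltW; apply: le_trans.
Qed.

Lemma forest_child_uniq p x a b : (p, x) \in F -> (x, a) \in F -> (x, b) \in F -> a = b.
Proof.
move=> px xa xb; have [/cyclic_neighbour_sym neigh_xp lt_px] := forest_arc px.
have [neigh_xa lt_xa] := forest_arc xa; have [neigh_xb lt_xb] := forest_arc xb.
case: (cyclic_neighbour_pigeonhole neigh_xa neigh_xb neigh_xp) => // eq_p.
  by move: (lt_trans lt_px lt_xa); rewrite eq_p ltxx.
by move: (lt_trans lt_px lt_xb); rewrite eq_p ltxx.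
Qed.

Lemma desc_comparable x y v : desc x v -> desc y v -> desc x y \/ desc y x.
Proof.
elim/(fin_lt_ind (f := A)): v x y => v IH x y.
case/connect_last=> [-> yv|[u xu uv]]; first by right.
case/connect_last=> [-> |[w yw wv]]; first by left; apply: connect_trans xu (desc1 uv).
rewrite -(forest_parent_uniq forestF uv wv) in yw.
have [xy|yx] := IH u (forest_lt uv) x y xu yw; [left|right] => //.
Qed.

Lemma desc_root_uniq r r' v :
  r \in roots -> r' \in roots -> desc r v -> desc r' v -> r = r'.
Proof.
move=> rR r'R rv r'v; have [] := desc_comparable rv r'v => /connect_last [//|[u _]].
  by rewrite /arc_rel (negbTE (forest_root_orphan forestF u r'R)).
by rewrite /arc_rel (negbTE (forest_root_orphan forestF u rR)).
Qed.

Lemma root_desc v : exists2 r, r \in roots & desc r v.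
Proof.
elim/(fin_lt_ind (f := A)): v => v IH; case: (forest_cover forestF v) => [vR|[u uv]].
  by exists v.
have [r rR ru] := IH u (forest_lt uv); exists r => //.
by apply: connect_trans ru (desc1 uv).
Qed.

Lemma sibling_not_desc r a b : (r, a) \in F -> (r, b) \in F -> a != b -> ~~ desc a b.
Proof.
move=> ra rb neq_ab; apply/negP => /connect_last [eq_ab|[u au ub]].
  by rewrite eq_ab eqxx in neq_ab.
rewrite (forest_parent_uniq forestF ub rb) in au.
by have := desc_le au; rewrite leNgt (forest_lt ra).
Qed.

Lemma minchild_eq x c : (forall w, ((x, w) \in F) = (w == c)) -> minchild A F x = Some c.
Proof.
move=> only_c; rewrite /minchild /children (eq_filter (a2 := pred1 c)) //.
by rewrite filter_pred1_uniq ?enum_uniq ?mem_enum.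
Qed.

Lemma minchild_leaf x : (forall w, (x, w) \notin F) -> minchild A F x = None.
Proof.
move=> leaf; rewrite /minchild /children (eq_filter (a2 := pred0)) ?filter_pred0 //.
by move=> w /=; apply/negbTE.
Qed.

Lemma desc_path x : (exists p, (p, x) \in F) -> exists t,
  [/\ sorted le (x :: t), uniq (x :: t), path_arcs (x :: t) \subset F,
      forall y, (y \in x :: t) = desc x y & follows (minchild A F) (x :: t)].
Proof.
elim/(fin_lt_ind (f := fun x => - A x)): x => x IH [p px].
case: (pickP (arc_rel F x)) => [c /= xc|leaf]; last first.
  exists [::]; split=> //; first exact: sub0set.
    move=> y; rewrite inE; apply/eqP/idP => [<-|/connect_first [//|[z]]].
      exact: connect0.
    by rewrite leaf.
  move=> [|a pre] y t; last by case=> _; case: pre.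
  by case=> <- <-; apply: minchild_leaf => w; apply/negbT/leaf.
have {}xc : (x, c) \in F by [].
have lt_xc := forest_lt xc.
have ltN_cx : - A c < - A x by rewrite ltrN2.
have [t [sorted_t uniq_t arcs_t mem_t fol_t]] := IH c ltN_cx (ex_intro _ x xc).
have x_notin : x \notin c :: t.
  by rewrite mem_t; apply/negP => /desc_le; rewrite leNgt lt_xc.
exists (c :: t); split.
- by rewrite /= /leA (ltW lt_xc).
- by rewrite cons_uniq x_notin.
- by rewrite subUset sub1set xc arcs_t.
- move=> y; rewrite in_cons mem_t; apply/idP/idP.
    by case/predU1P => [->|/(connect_trans (desc1 xc))].
  case/connect_first => [->|[d xd dy]]; first by rewrite eqxx.
  by rewrite -(forest_child_uniq px xd xc) dy orbT.
move=> [|a pre] y t' /=; last by case=> _ def_t; apply: fol_t def_t.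
case=> <- <- /=; apply: minchild_eq => w.
by apply/idP/eqP => [/(forest_child_uniq px xc) <-|->].
Qed.

Lemma mem_children r a : (a \in children F r) = ((r, a) \in F).
Proof. by rewrite mem_filter mem_enum andbT. Qed.

Lemma desc_children r y : desc r y = (y == r) || has (desc^~ y) (children F r).
Proof.
apply/idP/idP => [/connect_first [->|[a ra ay]]|/predU1P [->|/hasP [a]]].
- by rewrite eqxx.
- by apply/orP; right; apply/hasP; exists a; rewrite ?mem_children.
- exact: connect0.
- by rewrite mem_children => /desc1; apply: connect_trans.
Qed.

Lemma cons_subtree_chain r m X : sorted le m -> uniq m -> path_arcs m \subset F :|: X ->
  (if m is y :: _ then (r, y) \in F else true) ->
  (forall y, (y \in m) = has (desc^~ y) (children F r)) ->
  [/\ sorted le (r :: m), uniq (r :: m), path_arcs (r :: m) \subset F :|: X &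
      forall y, (y \in r :: m) = desc r y].
Proof.
move=> sorted_m uniq_m arcs_m head_m mem_m.
have lt_m y : y \in m -> A r < A y.
  rewrite mem_m => /hasP [a]; rewrite mem_children => /forest_lt lt_ra /desc_le.
  exact: lt_le_trans.
split.
- by rewrite /= path_min_sorted //; apply/allP => y /lt_m /ltW.
- by rewrite cons_uniq uniq_m andbT; apply/negP => /lt_m; rewrite ltxx.
- apply: path_arcs_cons_sub arcs_m.
  by case: m {sorted_m uniq_m mem_m lt_m} head_m => // y m ry; rewrite in_setU ry.
- by move=> y; rewrite desc_children in_cons mem_m.
Qed.

Definition subtree_merge_arcs r : arcs n :=
  if children F r is [:: a; b] then mchain A (minchild A F) (minchild A F) n a b set0
  else set0.

Definition is_subtree_chain r c : Prop :=
  [/\ head x0 c = r, sorted le c, uniq c, forall y, (y \in c) = desc r y &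
      path_arcs c \subset F :|: subtree_merge_arcs r /\
      subtree_merge_arcs r \subset increasing_arcs_on c].

Lemma two_subtrees_chain r a b : children F r = [:: a; b] -> uniq [:: a; b] ->
  exists c, is_subtree_chain r c.
Proof.
move=> def_ch uniq_ab; rewrite /is_subtree_chain /subtree_merge_arcs def_ch.
set M := mchain _ _ _ _ _ _ _.
have [ra rb] : (r, a) \in F /\ (r, b) \in F.
  by split; rewrite -mem_children def_ch !inE eqxx ?orbT.
have neq_ab : a != b by move: uniq_ab; rewrite /= inE andbT.
have [ta [sorted_a uniq_a arcs_a mem_a fol_a]] := desc_path (ex_intro _ r ra).
have [tb [sorted_b uniq_b arcs_b mem_b fol_b]] := desc_path (ex_intro _ r rb).
have dis x y : x \in a :: ta -> y \in b :: tb -> x != y.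
  rewrite mem_a mem_b => ax by_; apply/eqP => eq_xy; rewrite -eq_xy in by_.
  have neq_ba : b != a by rewrite eq_sym.
  case: (desc_comparable ax by_) => [ab|ba].
    by move/negP: (sibling_not_desc ra rb neq_ab).
  by move/negP: (sibling_not_desc rb ra neq_ba).
have uniq_ab_t : uniq ((a :: ta) ++ (b :: tb)).
  rewrite cat_uniq uniq_a uniq_b andbT; apply/hasPn => y yb.
  by apply/negP => ya; move: (dis y y ya yb); rewrite eqxx.
have lt_f : (size ta + size tb < n)%N.
  by move: (size_uniq_ord uniq_ab_t); rewrite size_cat /= addSn addnS => /ltnW.
set m := merge le (a :: ta) (b :: tb).
have arcs_m : path_arcs m \subset F :|: M.
  apply: subset_trans (mchain_path_arcs set0 fol_a fol_b dis lt_f) _.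
  by apply: setSU; rewrite subUset arcs_a arcs_b.
have head_m : is_true (if m is y :: _ then (r, y) \in F else true).
  by rewrite /m merge_cons2; case: ifP.
have mem_m y : (y \in m) = has (desc^~ y) (children F r).
  by rewrite mem_merge mem_cat mem_a mem_b def_ch /= orbF.
have sorted_m : sorted le m := merge_sorted leA_total sorted_a sorted_b.
have uniq_m : uniq m by rewrite merge_uniq.
have [sorted_c uniq_c arcs_c mem_c] :=
  cons_subtree_chain sorted_m uniq_m arcs_m head_m mem_m.
exists (r :: m); split=> //; split=> //.
apply: subset_trans (mchain_sub_increasing _ set0 fol_a fol_b dis) _; rewrite set0U.
by apply: increasing_arcs_onS => y yU; apply: mem_tail; rewrite mem_merge.
Qed.

Lemma subtree_chain r : exists c, is_subtree_chain r c.
Proof.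
have uniq_ch : uniq (children F r) by apply/filter_uniq/enum_uniq.
case def_ch : (children F r) uniq_ch => [|a [|b [|d rest]]] uniq_ch; last 2 first.
- exact: two_subtrees_chain def_ch uniq_ch.
- exfalso; have [ra rb rd] : [/\ (r, a) \in F, (r, b) \in F & (r, d) \in F].
    by split; rewrite -mem_children def_ch !inE eqxx ?orbT.
  move: uniq_ch; rewrite /= !inE !negb_or.
  case/andP=> /and3P [neq_ab neq_ad _] /andP [/andP [neq_bd _] _].
  have [nb_a nb_b nb_d] := And3 (forest_arc ra).1 (forest_arc rb).1 (forest_arc rd).1.
  by case: (cyclic_neighbour_pigeonhole nb_a nb_b nb_d) => eq_xy;
    [move: neq_ab|move: neq_ad|move: neq_bd]; rewrite eq_xy eqxx.
all: rewrite /is_subtree_chain /subtree_merge_arcs def_ch.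
- have mem_nil y : (y \in [::]) = has (desc^~ y) (children F r) by rewrite def_ch.
  have [_ _ _ mem_c] :=
    cons_subtree_chain (m := [::]) (X := set0) isT isT (sub0set _) isT mem_nil.
  by exists [:: r]; split=> //; split; apply: sub0set.
have ra : (r, a) \in F by rewrite -mem_children def_ch mem_head.
have [t [sorted_t uniq_t arcs_t mem_t _]] := desc_path (ex_intro _ r ra).
have mem_at y : (y \in a :: t) = has (desc^~ y) (children F r).
  by rewrite def_ch /= orbF mem_t.
have arcs_at : path_arcs (a :: t) \subset F :|: set0 by rewrite setU0.
have [] := cons_subtree_chain sorted_t uniq_t arcs_at ra mem_at.
by exists [:: r, a & t]; split=> //; split=> //; apply: sub0set.
Qed.

Lemma subtree_chains rs : exists2 cs, map (head x0) cs = rs &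
  forall c, c \in cs -> is_subtree_chain (head x0 c) c.
Proof.
elim: rs => [|r rs [cs def_rs chains_cs]]; first by exists [::].
have [c chain_c] := subtree_chain r; have [head_c _ _ _ _] := chain_c.
exists (c :: cs); first by rewrite /= head_c def_rs.
by move=> c' /predU1P [->|/chains_cs //]; rewrite head_c.
Qed.

Lemma uniq_flatten_subtree_chains cs : uniq (map (head x0) cs) ->
  {subset map (head x0) cs <= roots} ->
  (forall c, c \in cs -> is_subtree_chain (head x0 c) c) -> uniq (flatten cs).
Proof.
elim: cs => [|c cs IH] //= /andP [head_notin uniq_heads] sub_roots chains_cs.
have sub_tl : {subset map (head x0) cs <= roots}.
  by move=> r rcs; apply: sub_roots; rewrite mem_tail.
have chains_tl c' : c' \in cs -> is_subtree_chain (head x0 c') c'.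
  by move=> c'cs; apply: chains_cs; rewrite mem_tail.
have [_ _ uniq_c mem_c _] := chains_cs c (mem_head _ _).
rewrite cat_uniq uniq_c IH // andbT; apply/hasPn => y /flattenP [c' c'cs yc'].
apply/negP => yc; have [_ _ _ mem_c' _] := chains_tl c' c'cs.
have eq_heads : head x0 c = head x0 c'.
  apply: (desc_root_uniq (v := y) (sub_roots _ (mem_head _ _)) (sub_tl _ (map_f _ c'cs))).
    by rewrite -mem_c.
  by rewrite -mem_c'.
by move: head_notin; rewrite eq_heads map_f.
Qed.

Lemma merge_subtrees_chains : exists2 cs, map (head x0) cs = roots &
  chain_decomposition (merge_subtrees A F roots) cs.
Proof.
have [cs def_roots chains_cs] := subtree_chains roots; exists cs => //.
have head_root c : c \in cs -> head x0 c \in roots by rewrite -def_roots; apply: map_f.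
have chain_of r : r \in roots -> exists2 c, c \in cs & head x0 c = r.
  by rewrite -def_roots => /mapP [c ccs ->]; exists c.
have merge_arcs e : e \in merge_subtrees_arcs A F roots ->
    exists2 c, c \in cs & e \in subtree_merge_arcs (head x0 c).
  by case/bigcup_seqP=> r /chain_of [c ccs <-] er; exists c.
have merged_inc c e : c \in cs -> e \in subtree_merge_arcs (head x0 c) ->
    [&& A e.1 < A e.2, e.1 \in c & e.2 \in c].
  move=> ccs; have [_ _ _ _ [_ /subsetP inc_c]] := chains_cs c ccs.
  by move/inc_c; rewrite inE.
split.
- by move=> x y /setUP [/forest_lt //|/merge_arcs [c ccs /(merged_inc c _ ccs) /andP []]].
- move=> c ccs; have [head_c sorted_c uniq_c mem_c [arcs_c _]] := chains_cs c ccs.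
  split; last by apply/eqP => c_nil; move: (mem_c (head x0 c)); rewrite connect0 c_nil.
  split=> //.
    apply: subset_trans arcs_c _; apply: setUS; rewrite /merge_subtrees_arcs.
    by apply/subsetP => e ec; apply/bigcup_seqP; exists (head x0 c); rewrite ?head_root.
  move=> x y xc /setUP [xy|/merge_arcs [c' c'cs]].
    by rewrite mem_c (connect_trans _ (desc1 xy)) // -mem_c.
  move/(merged_inc c' _ c'cs) => /and3P [_ xc' yc'].
  have [_ _ _ mem_c' _] := chains_cs c' c'cs.
  have same_root : head x0 c' = head x0 c.
    apply: (desc_root_uniq (v := x) (head_root _ c'cs) (head_root _ ccs)).
      by rewrite -mem_c'.
    by rewrite -mem_c.
  by rewrite mem_c -same_root -mem_c'.
- apply: uniq_flatten_subtree_chains chains_cs; rewrite def_roots //.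
  exact: forest_roots_uniq forestF.
move=> x y _; have [r rR rx] := root_desc x; have [c ccs head_c] := chain_of r rR.
by apply/flattenP; exists c => //; have [_ _ _ -> _] := chains_cs c ccs; rewrite head_c.
Qed.

End ReachOneForest.

End Merging.

Theorem corollary4 (R : realType) (n : nat) (A : 'I_n -> R) (L : seq 'I_n) :
  injective A ->
  perm_eq L (enum 'I_n) ->
  let G := reach_one_graph A in
  let FR := dfs_forest A G L in                      (* F and its roots *)
  let HR := merge_step A (merge_subtrees A FR.1 FR.2) FR.2 in   (* H, R *)
  let F' := (dfs_forest A HR.1 HR.2).1 in
  let H'R' := merge_step A F' HR.2 in          (* H', R' *)
  all_components_dipaths (dfs_forest A H'R'.1 H'R'.2).1.
Proof.
(* The vertex whose component is examined also serves as default for [head]. *)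
move=> injA permL G FR HR F' H'R' x0.
have forestF : rooted_forest G FR.1 FR.2.
  by apply: dfs_forest_rooted => w; rewrite (perm_mem permL) mem_enum.
have [cs def_roots decH] := merge_subtrees_chains injA x0 forestF.
have [] := merge_step_chains injA x0 decH; rewrite def_roots -/HR => def_R decH'.
have def_F' : F' = \bigcup_(c <- merge_pairs A cs) path_arcs c.
  by rewrite /F' def_R (dfs_forest_chains injA x0 decH').
have [] := merge_step_chains injA x0 (chain_decomposition_forest decH').
rewrite -def_F' -def_R -/H'R' => def_R' decH''.
by rewrite def_R' (dfs_forest_chains injA x0 decH''); exact: chain_forest_dipaths decH'' x0.
Qed.
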